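(* Let $n\ge2$ be an integer, $\sigma\ge0$, $R'>0$, and define $a_1=\frac{n}{2R'}$, $a_2=\frac{a_1}{n-1}$, $a_k=\min\big\{(1+\frac1{n-1})a_{k-1},\frac{\sqrt{n(n+\sigma A_{k-1})}}{2R'}\big\}$ for $k\ge3$, where $A_k=\sum_{i=1}^ka_i$. Let $K_0=\big\lceil\frac{\log n}{\log n-\log(n-1)}\big\rceil$. Then for all $k\ge K_0$, $A_k\ge\frac{n(k-K_0+n-1)}{2R'}$. *)

From HB Require Import structures.
From mathcomp Require Import all_boot all_order all_algebra.
From mathcomp Require Import all_classical all_reals all_analysis.
Set Implicit Arguments. Unset Strict Implicit. Unset Printing Implicit Defensive.
Import Order.TTheory GRing.Theory Num.Theory.
Local Open Scope ring_scope.

Fixpoint aA {R : realType} (n : nat) (sigma Rp : R) (k : nat) : R * R :=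
  match k with
  | 0 => (0, 0)
  | 1 => let a := n%:R / (2 * Rp) in (a, a)
  | 2 => let a1 := n%:R / (2 * Rp) in
         let a := a1 / (n%:R - 1) in (a, a1 + a)
  | k'.+1 => let p := aA n sigma Rp k' in
             let a := Num.min ((1 + 1 / (n%:R - 1)) * p.1)
                              (Num.sqrt (n%:R * (n%:R + sigma * p.2)) / (2 * Rp)) in
             (a, p.2 + a)
  end.

Definition seq_a {R : realType} (n : nat) (sigma Rp : R) (k : nat) : R := (aA n sigma Rp k).1.
Definition seq_A {R : realType} (n : nat) (sigma Rp : R) (k : nat) : R := (aA n sigma Rp k).2.

Definition K0 {R : realType} (n : nat) : int :=
  Num.ceil (ln (n%:R : R) / (ln (n%:R : R) - ln (n%:R - 1 : R))).

From HB Require Import structures.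
From mathcomp Require Import all_boot all_order all_algebra.
From mathcomp Require Import all_classical all_reals all_analysis.
From mathcomp Require Import ring lra.
Set Implicit Arguments. Unset Strict Implicit. Unset Printing Implicit Defensive.
Import Order.TTheory GRing.Theory Num.Theory.
Local Open Scope ring_scope.

(* The square-root branch of the recurrence is never below a_1 (as sigma A_k >= 0),
   so an induction gives a_(k+1) >= min (A_k / (n-1)) a_1, that is
   A_(k+1) >= A_k + min (A_k / (n-1)) a_1.  Hence A_k grows geometrically with
   ratio n/(n-1) until it reaches (n-1) a_1, and by at least a_1 per step
   afterwards; K_0 steps suffice for the geometric phase, since
   (n/(n-1))^(K_0 - 1) >= n - 1. *)

Section MinGrowth.
Variables (R : realFieldType) (d c : R).
Hypotheses (d_gt0 : 0 < d) (c_gt0 : 0 < c).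

Lemma min_growth_homo : {homo (fun y => y + Num.min (y / d) c) : y z / y <= z}.
Proof.
by move=> y z yz; rewrite lerD // le_min2 // ler_pM2r ?invr_gt0.
Qed.

Lemma min_growth_geometric_step t :
  c * Num.min (t * (1 + d^-1)) d <= c * Num.min t d + Num.min (c * Num.min t d / d) c.
Proof.
case: (leP t d) => td.
  have -> : Num.min (c * t / d) c = c * t / d.
    by apply/min_idPl; rewrite ler_pdivrMr // ler_pM2l.
  have -> : c * t + c * t / d = c * (t * (1 + d^-1)) by rewrite !mulrDr mulr1 mulrA.
  by rewrite ler_pM2l // ge_min lexx.
rewrite mulfK ?gt_eqF // minxx.
apply: (@le_trans _ _ (c * d)); first by rewrite ler_pM2l // ge_min lexx orbT.
by rewrite lerDl ltW.
Qed.

Lemma min_growth_propagate y b :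
  0 <= b -> Num.min (y / d) c <= b -> Num.min ((y + b) / d) c <= b + b / d.
Proof.
move=> b_ge0; rewrite ge_min => /orP[yb|cb].
  by rewrite ge_min mulrDl lerD2r yb.
by rewrite ge_min (le_trans cb) ?orbT // lerDl divr_ge0 // ltW.
Qed.

Variable x : nat -> R.
Hypotheses (x0_ge : c <= x 0) (x_step : forall m, x m + Num.min (x m / d) c <= x m.+1).

Lemma min_growth_expr m : c * Num.min ((1 + d^-1) ^+ m) d <= x m.
Proof.
elim: m => [|m IH].
  by apply: le_trans x0_ge; rewrite expr0 ger_pMr // ge_min lexx.
rewrite exprSr (le_trans (min_growth_geometric_step _)) //.
by rewrite (le_trans _ (x_step m)) // min_growth_homo.
Qed.

Lemma min_growth_linear K j : c * d <= x K -> c * (j%:R + d) <= x (K + j).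
Proof.
move=> xK; elim: j => [|j IH]; first by rewrite addn0 add0r.
rewrite addnS -natr1 (le_trans _ (x_step _)) //.
have -> : Num.min (x (K + j) / d) c = c.
  apply/min_idPr; rewrite ler_pdivlMr //; apply: le_trans IH.
  by rewrite ler_pM2l // lerDr.
lra.
Qed.

Lemma min_growth_after K : d <= (1 + d^-1) ^+ K -> forall j, c * (j%:R + d) <= x (K + j).
Proof.
move=> dK j; apply: min_growth_linear.
by rewrite -[d in c * d](min_idPr dK) min_growth_expr.
Qed.

End MinGrowth.

Section LowerBoundRecurrence.
Variables (R : realType) (n : nat) (sigma Rp : R).
Hypotheses (n_ge2 : (2 <= n)%N) (sigma_ge0 : 0 <= sigma) (Rp_gt0 : 0 < Rp).

Let N : R := n%:R.
Let a1 : R := N / (2 * Rp).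
Let a := seq_a n sigma Rp.
Let A := seq_A n sigma Rp.

Let N_gt1 : 1 < N. Proof. by rewrite /N ltr1n. Qed.

Let d_gt0 : 0 < N - 1. Proof. by rewrite subr_gt0 N_gt1. Qed.

Let a1_gt0 : 0 < a1.
Proof. by rewrite divr_gt0 ?mulr_gt0 // (lt_trans ltr01 N_gt1). Qed.

Lemma seq_A_succ m : A m.+2 = A m.+1 + a m.+2.
Proof. by case: m. Qed.

Lemma a1_le_sqrt_term y : 0 <= y -> a1 <= Num.sqrt (N * (N + sigma * y)) / (2 * Rp).
Proof.
move=> y_ge0; rewrite ler_pM2r ?invr_gt0 ?mulr_gt0 //.
have N_ge0 : 0 <= N by rewrite /N ler0n.
rewrite -[N in N <= _]ger0_norm // -sqrtr_sqr ler_sqrt ?mulr_ge0 ?addr_ge0 ?mulr_ge0 //.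
by rewrite expr2 ler_pM2l ?lerDl ?mulr_ge0 // (lt_le_trans ltr01) ?ltW ?N_gt1.
Qed.

Lemma seq_aA_ge m : 0 <= A m.+1 /\ Num.min (A m.+1 / (N - 1)) a1 <= a m.+2.
Proof.
elim: m => [|m [A_ge0 a_ge]].
  have -> : A 1 = a1 by [].
  have -> : a 2 = a1 / (N - 1) by [].
  by split; [exact: ltW a1_gt0 | rewrite ge_min lexx].
have a_ge0 : 0 <= a m.+2.
  by apply: le_trans _ a_ge; rewrite le_min divr_ge0 ?(ltW a1_gt0) ?(ltW d_gt0).
have A_ge0' : 0 <= A m.+2 by rewrite seq_A_succ addr_ge0.
have -> : a m.+3 = Num.min ((1 + 1 / (N - 1)) * a m.+2)
                           (Num.sqrt (N * (N + sigma * A m.+2)) / (2 * Rp)) by [].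
split => //; rewrite le_min; apply/andP; split.
  by rewrite mulrDl !mul1r [_^-1 * _]mulrC seq_A_succ min_growth_propagate.
by apply: le_trans _ (a1_le_sqrt_term A_ge0'); rewrite ge_min lexx orbT.
Qed.

Lemma seq_A_min_growth m : A m.+1 + Num.min (A m.+1 / (N - 1)) a1 <= A m.+2.
Proof. by rewrite seq_A_succ lerD2l; case: (seq_aA_ge m). Qed.

End LowerBoundRecurrence.

Lemma ler_expn_ln (R : realType) (q y : R) (m : nat) :
  1 < q -> 0 < y -> ln y / ln q <= m%:R -> y <= q ^+ m.
Proof.
move=> q_gt1 y_gt0; have q_gt0 : 0 < q := lt_trans ltr01 q_gt1.
rewrite ler_pdivrMr ?ln_gt0 // => lnym.
by rewrite -ler_ln ?posrE ?exprn_gt0 // lnXn // -mulr_natr mulrC.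
Qed.

Lemma K0_spec (R : realType) n : (2 <= n)%N ->
  exists2 K : nat, K0 (R := R) n = K.+1 & n%:R - 1 <= (1 + (n%:R - 1)^-1 : R) ^+ K.
Proof.
move=> n_ge2; set N : R := n%:R; set q := 1 + (N - 1)^-1.
have N_gt1 : 1 < N by rewrite ltr1n.
have N_gt0 : 0 < N := lt_trans ltr01 N_gt1.
have d_gt0 : 0 < N - 1 by rewrite subr_gt0.
have qE : q = N / (N - 1) by rewrite /q; field; rewrite lt0r_neq0.
have q_gt1 : 1 < q by rewrite /q ltrDl invr_gt0.
have lnqE : ln N - ln (N - 1) = ln q by rewrite qE ln_div ?posrE.
have ratio_gt0 : 0 < ln N / ln q by rewrite divr_gt0 ?ln_gt0.
have := ceil_ge (ln N / ln q); have := ceil_gt0 (ln N / ln q).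
rewrite /K0 -/N lnqE ratio_gt0; case: (Num.ceil _) => [[|K]|K] //= _ ratio_le.
exists K => //.
have := ler_expn_ln q_gt1 N_gt0 ratio_le.
by rewrite exprSr qE mulrA ler_pdivlMr // [_ ^+ K * N]mulrC ler_pM2l.
Qed.

Theorem proposition4 (R : realType) (n : nat) (sigma Rp : R)
  (hn : (2 <= n)%N) (hsigma : 0 <= sigma) (hRp : 0 < Rp) (k : nat) :
  (K0 (R := R) n <= k%:Z) ->
  n%:R * ((k%:R - (K0 (R := R) n)%:~R + n%:R - 1) : R) / (2 * Rp) <= seq_A n sigma Rp k.
Proof.
move=> K0_le_k; have [K K0E qK] := K0_spec R hn.
have [j ->] : exists j, k = (K.+1 + j)%N.
  by exists (k - K.+1)%N; rewrite subnKC // -lez_nat -K0E.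
have c_gt0 : 0 < n%:R / (2 * Rp) :> R by rewrite divr_gt0 ?mulr_gt0 ?ltr0n // ltnW.
have d_gt0 : 0 < n%:R - 1 :> R by rewrite subr_gt0 ltr1n.
suff -> : n%:R * ((K.+1 + j)%:R - (K0 (R := R) n)%:~R + n%:R - 1) / (2 * Rp)
        = n%:R / (2 * Rp) * (j%:R + (n%:R - 1)).
  exact: (min_growth_after (x := fun m => seq_A n sigma Rp m.+1) d_gt0 c_gt0 (lexx _)
    (seq_A_min_growth hn hsigma hRp) qK j).
by rewrite K0E -pmulrn natrD; ring.
Qed.
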